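(* Let $I\subset K[x_1,\ldots,x_n]$ be a nonzero graded ideal with generic tropical variety $\mathrm{gT}(I)$. If $\omega\in\mathrm{gT}(I)$, then $\sigma(\omega)\in\mathrm{gT}(I)$ for every $\sigma\in S_n$.
   Context: $K$ is an algebraically closed field of characteristic $0$ with trivial valuation. Each $g=(g_{ij})\in\mathrm{GL}_n(K)$ acts on $K[x_1,\ldots,x_n]$ by $x_i\mapsto\sum_j g_{ij}x_j$; $\mathrm{GL}_n(K)$ has the Zariski topology. For $f=\sum_\nu a_\nu x^\nu$ and $\omega\in\mathbb{R}^n$, $\mathrm{in}_\omega(f)$ is the sum of the terms with $\omega\cdot\nu$ minimal, and $T(I)=\{\omega:\mathrm{in}_\omega(f)\text{ is not a monomial for every }f\in I\}$ (viewed as a subfan of the Gröbner fan). The generic tropical variety $\mathrm{gT}(I)$ is the fan equal to $T(g(I))$ for all $g$ in some non-empty Zariski-open subset of $\mathrm{GL}_n(K)$; such a fan exists for every nonzero graded ideal (it is empty if $\dim I=0$). $S_n$ is the symmetric group, and for $\sigma\in S_n$, $\sigma(\omega)=(\omega_{\sigma(1)},\ldots,\omega_{\sigma(n)})$. *)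

From HB Require Import structures.
From mathcomp Require Import all_boot all_order all_algebra all_fingroup.
From mathcomp Require Import reals.
From mathcomp Require Import mpoly.

Set Implicit Arguments.
Unset Strict Implicit.
Unset Printing Implicit Defensive.
Import Order.TTheory GRing.Theory Num.Theory.
Local Open Scope ring_scope.

Section Defs.
Variables (K : fieldType) (n : nat).

Definition is_ideal (I : {mpoly K[n]} -> Prop) : Prop :=
  [/\ I 0, (forall f g, I f -> I g -> I (f + g)) & (forall f g, I g -> I (f * g))].

Definition hcomp (d : nat) (f : {mpoly K[n]}) : {mpoly K[n]} :=
  \sum_(m <- msupp f | mdeg m == d) f@_m *: 'X_[m].

Definition is_graded_ideal (I : {mpoly K[n]} -> Prop) : Prop :=
  is_ideal I /\ (forall f d, I f -> I (hcomp d f)).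

Definition nonzero_ideal (I : {mpoly K[n]} -> Prop) : Prop :=
  exists f, I f /\ f != 0.

Definition lin_act (g : 'M[K]_n) (f : {mpoly K[n]}) : {mpoly K[n]} :=
  f \mPo [tuple \sum_(j < n) g i j *: 'X_j | i < n].

Definition act_ideal (g : 'M[K]_n) (I : {mpoly K[n]} -> Prop) : {mpoly K[n]} -> Prop :=
  fun h => exists f, I f /\ h = lin_act g f.

(* Zariski topology on GL_n(K): open sets are GL_n minus the common zero set of
   a family S of polynomials in the n*n matrix entries *)
Definition mx_entries (g : 'M[K]_n) : 'I_(n * n) -> K := fun k => mxvec g 0 k.

Definition zariski_open_GL (U : 'M[K]_n -> Prop) : Prop :=
  exists S : {mpoly K[n * n]} -> Prop,
    forall g, U g <-> (g \in unitmx /\ exists p, S p /\ p.@[mx_entries g] != 0).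

Variable R : realType.

Definition wt (w : 'I_n -> R) (m : 'X_{1..n}) : R := \sum_(i < n) w i * (m i)%:R.

Definition in_form (w : 'I_n -> R) (f : {mpoly K[n]}) : {mpoly K[n]} :=
  \sum_(m <- msupp f | all (fun m' => wt w m <= wt w m') (msupp f)) f@_m *: 'X_[m].

Definition is_monomial (p : {mpoly K[n]}) : Prop :=
  exists c m, c != 0 /\ p = c *: 'X_[m].

Definition trop (I : {mpoly K[n]} -> Prop) (w : 'I_n -> R) : Prop :=
  forall f, I f -> ~ is_monomial (in_form w f).

Definition is_generic_trop (I : {mpoly K[n]} -> Prop) (F : ('I_n -> R) -> Prop) : Prop :=
  exists U : 'M[K]_n -> Prop,
    [/\ zariski_open_GL U, (exists g, U g) &
        forall g, U g -> forall w, trop (act_ideal g I) w <-> F w].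

End Defs.

From HB Require Import structures.
From mathcomp Require Import all_boot all_order all_algebra all_fingroup.
From mathcomp Require Import reals.
From mathcomp Require Import mpoly.
Set Implicit Arguments.
Unset Strict Implicit.
Unset Printing Implicit Defensive.
Import Order.TTheory GRing.Theory Num.Theory.
Local Open Scope ring_scope.

(* Permuting the variables commutes with taking initial forms up to permuting
   the weight: in_(w o s) (s^-1 f) = s^-1 (in_w f), which is a monomial iff
   in_w f is.  As the coordinate change by the permutation matrix P of s^-1 is
   this permutation of variables, T((gP)(I)) is the s-permuted T(g(I)).  So it
   suffices to find g with both g and gP in the non-empty Zariski-open set U
   defining gT(I): on the line through g0 in U and g0 P^-1, each of the two
   conditions fails only at the roots of a nonzero polynomial, and K is
   infinite. *)

Section ZariskiOpenGL.
Variables (K : closedFieldType) (n : nat).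

Lemma horner_mmap_mxvec (p : {mpoly K[n * n]}) (M : 'M[{poly K}]_n) x :
  (mmap polyC (fun k => mxvec M 0 k) p).[x] =
  p.@[mx_entries (map_mx (horner_eval x) M)].
Proof.
rewrite mevalE horner_sum; apply: eq_bigr => m _.
rewrite hornerM hornerC horner_prod; congr (_ * _); apply: eq_bigr => i _.
by rewrite horner_exp /mx_entries -map_mxvec mxE.
Qed.

Lemma zariski_open_GL_polymx (U : 'M[K]_n -> Prop) (M : 'M[{poly K}]_n) x0 :
  zariski_open_GL U -> U (map_mx (horner_eval x0) M) ->
  exists2 q : {poly K}, q != 0 &
    forall x, q.[x] != 0 -> U (map_mx (horner_eval x) M).
Proof.
case=> S HS /HS [unit_x0 [p [Sp px0]]].
pose q := \det M * mmap polyC (fun k => mxvec M 0 k) p.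
have qE x : q.[x] = \det (map_mx (horner_eval x) M)
                    * p.@[mx_entries (map_mx (horner_eval x) M)].
  by rewrite hornerM horner_mmap_mxvec det_map_mx.
have q_unit x : q.[x] != 0 -> U (map_mx (horner_eval x) M).
  rewrite qE mulf_eq0 negb_or => /andP [detx px].
  by apply/HS; split; [rewrite unitmxE unitfE | exists p].
have qx0 : q.[x0] != 0 by rewrite qE mulf_neq0 // -unitfE -unitmxE.
by exists q => //; apply: contraNneq qx0 => ->; rewrite horner0.
Qed.

Lemma zariski_open_GL_meets_translate (U : 'M[K]_n -> Prop) (P : 'M[K]_n) :
  zariski_open_GL U -> (exists g, U g) -> P \in unitmx ->
  exists g, U g /\ U (g *m P).
Proof.
move=> HU [g0 Ug0] unitP; pose D := g0 *m invmx P - g0.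
pose M := map_mx polyC g0 + 'X *: map_mx polyC D.
have Mx x : map_mx (horner_eval x) M = g0 + x *: D.
  apply/matrixP => i j.
  by rewrite !mxE /horner_eval hornerD hornerM hornerX !hornerC.
have MPx x : map_mx (horner_eval x) (M *m map_mx polyC P) = (g0 + x *: D) *m P.
  rewrite map_mxM Mx; congr (_ *m _).
  by apply/matrixP => i j; rewrite !mxE /= horner_evalE hornerC.
have [|q1 q1_neq0 Uq1] := zariski_open_GL_polymx (M := M) (x0 := 0) HU.
  by rewrite Mx scale0r addr0.
have [|q2 q2_neq0 Uq2] :=
  zariski_open_GL_polymx (M := M *m map_mx polyC P) (x0 := 1) HU.
  by rewrite MPx scale1r addrC subrK mulmxKV.
have /closed_nonrootP [x] : q1 * q2 != 0 by rewrite mulf_neq0.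
rewrite /root hornerM mulf_eq0 negb_or => /andP [/Uq1 UMx /Uq2 UMPx].
by exists (g0 + x *: D); rewrite -MPx -Mx.
Qed.

End ZariskiOpenGL.

Section InitialForms.
Variables (K : fieldType) (n : nat) (R : realType).

Lemma mcoeff_in_form (w : 'I_n -> R) (f : {mpoly K[n]}) m :
  (in_form w f)@_m =
  if all (fun m' => wt w m <= wt w m') (msupp f) then f@_m else 0.
Proof.
rewrite /in_form raddf_sum big_mkcond /=.
under eq_bigr => m' _ do rewrite mcoeffZ mcoeffX.
have [mf | mNf] := boolP (m \in msupp f).
  rewrite (bigD1_seq m) ?msupp_uniq //= eqxx mulr1 big1 ?addr0 // => m' /negbTE.
  by rewrite eq_sym => ->; rewrite mulr0 if_same.
rewrite (memN_msupp_eq0 mNf) if_same big1_seq // => m' m'f.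
by rewrite (_ : (m' == m) = false) ?mulr0 ?if_same //; apply: contraNF mNf => /eqP <-.
Qed.

Lemma mem_msupp_msym (s : 'S_n) (p : {mpoly K[n]}) m :
  (m \in msupp (msym s p)) = ([multinom m (s i) | i < n] \in msupp p).
Proof. by rewrite !mcoeff_msupp mcoeff_sym. Qed.

Lemma wt_perm (w : 'I_n -> R) (s : 'S_n) m :
  wt (fun i => w (s i)) m = wt w [multinom m ((s^-1)%g i) | i < n].
Proof.
rewrite /wt [RHS](reindex_inj (@perm_inj _ s)) /=.
by apply: eq_bigr => i _; rewrite mnmE permK.
Qed.

Lemma in_form_msym (s : 'S_n) (w : 'I_n -> R) (f : {mpoly K[n]}) :
  in_form (fun i => w (s i)) (msym (s^-1)%g f) = msym (s^-1)%g (in_form w f).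
Proof.
apply/mpolyP => m; rewrite mcoeff_in_form !mcoeff_sym mcoeff_in_form.
congr (if _ then _ else _); apply/allP/allP => /= min_m m'.
  move=> m'f; have := min_m [multinom m' (s i) | i < n].
  rewrite !wt_perm mpermKV; apply.
  by rewrite mem_msupp_msym mpermKV.
by rewrite mem_msupp_msym wt_perm => /min_m; rewrite wt_perm.
Qed.

Lemma is_monomial_msym (s : 'S_n) (p : {mpoly K[n]}) :
  is_monomial (msym s p) -> is_monomial p.
Proof.
case=> c [m [c0 e]]; exists c, [multinom m (s i) | i < n]; split => //.
by rewrite -[p]msym1m -(mulgV s) msymMm e msymZ msymX invgK.
Qed.

Lemma msymXU (s : 'S_n) (j : 'I_n) : msym s ('X_j : {mpoly K[n]}) = 'X_(s j).
Proof. by rewrite /msym mmapX mmap1U. Qed.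

Lemma lin_act_mul_perm_mx (g : 'M[K]_n) (s : 'S_n) f :
  lin_act (g *m perm_mx s) f = msym s (lin_act g f).
Proof.
rewrite /lin_act !comp_mpolyEX raddf_sum /=; apply: eq_bigr => m _.
rewrite msymZ !comp_mpolyX rmorph_prod /=; congr (_ *: _).
apply: eq_bigr => i _; rewrite rmorphXn /= !tnth_mktuple; congr (_ ^+ _).
rewrite raddf_sum /=.
under eq_bigr => k _ do rewrite mxE scaler_suml.
rewrite exchange_big /=; apply: eq_bigr => j _.
rewrite msymZ msymXU (bigD1 (s j)) //= big1 ?addr0.
  by rewrite /perm_mx !mxE eqxx mulr1.
by move=> k nk; rewrite /perm_mx !mxE eq_sym (negbTE nk) mulr0 scale0r.
Qed.

End InitialForms.

Theorem theorem7p4 (K : closedFieldType) (R : realType) (n : nat)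
    (I : {mpoly K[n]} -> Prop) (F : ('I_n -> R) -> Prop) :
  [pchar K] =i pred0 ->
  is_graded_ideal I -> nonzero_ideal I ->
  is_generic_trop I F ->
  forall w : 'I_n -> R, F w ->
  forall s : 'S_n, F (fun i => w (s i)).
Proof.
move=> _ _ _ [U [openU nonemptyU gTU]] w Fw s.
have [g [Ug UgP]] :=
  zariski_open_GL_meets_translate openU nonemptyU (unitmx_perm K (s^-1)%g).
apply/(gTU _ UgP) => _ [f [If ->]].
rewrite (lin_act_mul_perm_mx g (s^-1)%g f) (in_form_msym s w) => /is_monomial_msym.
by apply: ((gTU _ Ug w).2 Fw); exists f.
Qed.
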